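(* Let $\mathbf C$ be an admissible category of coframes. There is an identity-on-morphisms functor $(L,\nu_L)\mapsto(L,C_{\nu_L})$ from $\mathbf C^{\mathrm{adh}}$ to $\mathbf C^{\mathrm{top}}$, which is right adjoint to the identity-on-morphisms functor $(L,C)\mapsto(L,\nu_C)$ from $\mathbf C^{\mathrm{top}}$ to $\mathbf C^{\mathrm{adh}}$.
   Context: A category of coframes has coframes as objects and coframe morphisms (preserving arbitrary infima and finite suprema); it is admissible if every powerset is an object and there are classes of index sets $\mathcal I,\mathcal J$ with morphisms exactly the monotone maps preserving existing $I$-indexed infima ($I\in\mathcal I$) and $J$-indexed suprema ($J\in\mathcal J$). Each coframe morphism $\varphi$ has a left adjoint $\varphi_!$. $\mathcal C_L$ is the set of complemented elements of $L$. An adherence structure on $L$ is a monotone $\nu:L\to L$ preserving finite suprema of complemented elements with $\nu(\ell)=\bigwedge\{\nu(a):a\in\mathcal C_L,a\ge\ell\}$; $\mathbf C^{\mathrm{adh}}$ has objects $(L,\nu_L)$ and morphisms the $\mathbf C$-morphisms $\varphi:L\to L'$ with $\nu_{L'}(\ell')\le\varphi(\nu_L(\varphi_!(\ell')))$ for all $\ell'$. A topological $\mathbf C$-object is $(L,C(L))$ with $C(L)$ a sublattice of $L$ consisting of complemented elements (its closed elements); $\mathbf C^{\mathrm{top}}$ has as morphisms the $\mathbf C$-morphisms $\varphi$ with $\varphi(C(L))\subseteq C(L')$. For an adherence structure $\nu$, $C_\nu=\{c\in\mathcal C_L:\nu(c)\le c\}$; for a topological structure $C$, $\nu_C(\ell)=\bigwedge\{c\in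 C:c\ge\ell\}$. *)

Set Implicit Arguments.
Unset Strict Implicit.

Record CLat := {
  car :> Type;
  le : car -> car -> Prop;
  inf : (car -> Prop) -> car;
  le_refl : forall x, le x x;
  le_trans : forall x y z, le x y -> le y z -> le x z;
  le_antisym : forall x y, le x y -> le y x -> x = y;
  inf_lb : forall (S : car -> Prop) x, S x -> le (inf S) x;
  inf_glb : forall (S : car -> Prop) y, (forall x, S x -> le y x) -> le y (inf S)
}.
Arguments le {c} _ _.
Arguments inf {c} _.

Section Ops.
Variable L : CLat.
Definition sup (S : L -> Prop) : L := inf (fun y => forall x, S x -> le x y).
Definition meet (a b : L) : L := inf (fun x => x = a \/ x = b).
Definition join (a b : L) : L := sup (fun x => x = a \/ x = b).
Definition top : L := inf (fun _ => False).
Definition bot : L := sup (fun _ => False).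
Definition iinf (I : Type) (g : I -> L) : L := inf (fun x => exists i, x = g i).
Definition isup (I : Type) (g : I -> L) : L := sup (fun x => exists i, x = g i).
Definition complemented (a : L) : Prop :=
  exists b, meet a b = bot /\ join a b = top.
End Ops.
Arguments top {L}.
Arguments bot {L}.

Definition coframe_law (L : CLat) : Prop :=
  forall (a : L) (S : L -> Prop),
    join a (inf S) = inf (fun x => exists s, S s /\ x = join a s).

Record Coframe := { cf :> CLat; cf_law : coframe_law cf }.

Definition coframe_mor (L L' : Coframe) (f : L -> L') : Prop :=
  (forall S : L -> Prop, f (inf S) = inf (fun y => exists x, S x /\ y = f x)) /\
  f bot = bot /\ (forall a b, f (join a b) = join (f a) (f b)).

Definition lower_adj (L L' : Coframe) (f : L -> L') (l' : L') : L :=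
  inf (fun l => le l' (f l)).

(** ** An admissible category C of coframes, described by
    - Ob : the class of its objects (coframes),
    - II, JJ : the classes of index sets;
    a C-morphism L -> L' (L, L' objects) is exactly a monotone map preserving
    the (existing) I-indexed infima (I in II) and J-indexed suprema (J in JJ). *)
Definition is_Cmor (II JJ : Type -> Prop) (L L' : Coframe) (f : L -> L') : Prop :=
  (forall a b, le a b -> le (f a) (f b)) /\
  (forall (I : Type), II I -> forall g : I -> L, f (iinf g) = iinf (fun i => f (g i))) /\
  (forall (J : Type), JJ J -> forall g : J -> L, f (isup g) = isup (fun j => f (g j))).

Definition iso_powerset (L : Coframe) (X : Type) : Prop :=
  exists (e : L -> (X -> Prop)) (e' : (X -> Prop) -> L),
    (forall a, e' (e a) = a) /\ (forall A, e (e' A) = A) /\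
    (forall a b, le a b <-> (forall x, e a x -> e b x)).

Definition admissible (Ob : Coframe -> Prop) (II JJ : Type -> Prop) : Prop :=
  (forall (L L' : Coframe) (f : L -> L'),
      Ob L -> Ob L' -> is_Cmor II JJ f -> coframe_mor f) /\
  (forall X : Type, exists L, Ob L /\ iso_powerset L X).

Definition adherence (L : Coframe) (nu : L -> L) : Prop :=
  (forall a b, le a b -> le (nu a) (nu b)) /\
  nu bot = bot /\
  (forall a b, complemented a -> complemented b -> nu (join a b) = join (nu a) (nu b)) /\
  (forall l, nu l = inf (fun y => exists a, complemented a /\ le l a /\ y = nu a)).

Definition adh_mor (II JJ : Type -> Prop) (L L' : Coframe)
    (nu : L -> L) (nu' : L' -> L') (f : L -> L') : Prop :=
  is_Cmor II JJ f /\ (forall l', le (nu' l') (f (nu (lower_adj f l')))).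

Definition topological (L : Coframe) (C : L -> Prop) : Prop :=
  (forall c, C c -> complemented c) /\
  C bot /\ C top /\
  (forall a b, C a -> C b -> C (join a b)) /\
  (forall a b, C a -> C b -> C (meet a b)).

Definition top_mor (II JJ : Type -> Prop) (L L' : Coframe)
    (C : L -> Prop) (C' : L' -> Prop) (f : L -> L') : Prop :=
  is_Cmor II JJ f /\ (forall c, C c -> C' (f c)).

Definition C_of (L : Coframe) (nu : L -> L) : L -> Prop :=
  fun c => complemented c /\ le (nu c) c.

Definition nu_of (L : Coframe) (C : L -> Prop) : L -> L :=
  fun l => inf (fun c => C c /\ le l c).


(* For a coframe morphism f with left adjoint f_!, the adherence condition
   nu'(l') <= f (nu (f_! l')) and "f maps nu-closed elements to nu'-closed elements"
   are interdefinable.  The first gives nu'(f c) <= f (nu (f_! (f c))) <= f (nu c) <= f c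
   for closed c.  Conversely, nu_C is an infimum of closed elements and f preserves
   infima, so nu'(l') <= f (nu_C (f_! l')) only has to be checked against the images
   f c of closed c >= f_! l'; there l' <= f c, hence nu'(l') <= nu'(f c) <= f c.
   As both functors are the identity on morphisms, functoriality and the hom-set
   bijection of the adjunction are instances of these two implications. *)

Section LatticeFacts.
Variable L : CLat.
Implicit Types x y z : L.

Lemma inf_ext (S T : L -> Prop) : (forall x, S x <-> T x) -> inf S = inf T.
Proof.
  intro H. apply le_antisym; apply inf_glb; intros x Hx; apply inf_lb, H; exact Hx.
Qed.

Lemma inf_le_inf (S T : L -> Prop) : (forall x, T x -> S x) -> le (inf S) (inf T).
Proof. intro H. apply inf_glb. intros x Hx. apply inf_lb, H, Hx. Qed.

Lemma bot_le x : le (@bot L) x.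
Proof. apply inf_lb. intros y []. Qed.

Lemma le_top x : le x (@top L).
Proof. apply inf_glb. intros y []. Qed.

Lemma le_bot_eq x : le x bot -> x = bot.
Proof. intro H. apply le_antisym; [exact H | apply bot_le]. Qed.

Lemma top_le_eq x : le top x -> x = top.
Proof. intro H. apply le_antisym; [apply le_top | exact H]. Qed.

Lemma meet_l x y : le (meet x y) x.
Proof. apply inf_lb. auto. Qed.

Lemma meet_r x y : le (meet x y) y.
Proof. apply inf_lb. auto. Qed.

Lemma meet_glb x y z : le z x -> le z y -> le z (meet x y).
Proof. intros. apply inf_glb. intros w [-> | ->]; assumption. Qed.

Lemma join_l x y : le x (join x y).
Proof. apply inf_glb. intros w Hw. apply Hw. auto. Qed.

Lemma join_r x y : le y (join x y).
Proof. apply inf_glb. intros w Hw. apply Hw. auto. Qed.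

Lemma join_lub x y z : le x z -> le y z -> le (join x y) z.
Proof. intros. apply inf_lb. intros w [-> | ->]; assumption. Qed.

Lemma join_comm x y : join x y = join y x.
Proof. apply le_antisym; apply join_lub; auto using join_l, join_r. Qed.

Lemma meet_comm x y : meet x y = meet y x.
Proof. apply le_antisym; apply meet_glb; auto using meet_l, meet_r. Qed.

Lemma meet_mono x y x' y' : le x x' -> le y y' -> le (meet x y) (meet x' y').
Proof.
  intros Hx Hy. apply meet_glb.
  - eapply le_trans; [apply meet_l | exact Hx].
  - eapply le_trans; [apply meet_r | exact Hy].
Qed.

Lemma join_mono x y x' y' : le x x' -> le y y' -> le (join x y) (join x' y').
Proof.
  intros Hx Hy. apply join_lub.
  - eapply le_trans; [exact Hx | apply join_l].
  - eapply le_trans; [exact Hy | apply join_r].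
Qed.

End LatticeFacts.

Section CoframeFacts.
Variable L : Coframe.
Implicit Types x y z : L.

Lemma join_meet_distr x y z : join x (meet y z) = meet (join x y) (join x z).
Proof.
  unfold meet at 1. rewrite (@cf_law L). apply inf_ext. intro w; split.
  - intros [s [[-> | ->] ->]]; auto.
  - intros [-> | ->]; eauto.
Qed.

Lemma meet_join_distr_le x y z :
  le (meet x (join y z)) (join (meet x y) (meet x z)).
Proof.
  assert (Hz : le (meet x (join y z)) (join z (meet x y))).
  { rewrite join_meet_distr. apply meet_mono.
    - apply join_r.
    - rewrite join_comm. apply le_refl. }
  rewrite (join_meet_distr (meet x y)). apply meet_glb.
  - eapply le_trans; [apply meet_l | apply join_r].
  - rewrite (join_comm _ (meet x y)). exact Hz.
Qed.

Lemma join_inf_inf (S T : L -> Prop) :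
  join (inf S) (inf T) = inf (fun x => exists s t, S s /\ T t /\ x = join s t).
Proof.
  rewrite (@cf_law L). apply le_antisym.
  - apply inf_glb. intros w [s [t [Ss [Tt ->]]]].
    eapply le_trans; [apply inf_lb; exists t; split; [exact Tt | reflexivity] |].
    rewrite join_comm, (@cf_law L). apply inf_lb. exists s. split; [exact Ss |].
    apply join_comm.
  - apply inf_glb. intros w [t [Tt ->]].
    rewrite join_comm, (@cf_law L). apply inf_le_inf.
    intros w [s [Ss ->]]. exists s, t. rewrite join_comm. auto.
Qed.

Lemma complemented_bot : complemented (@bot L).
Proof.
  exists top. split; [apply le_bot_eq, meet_l | apply top_le_eq, join_r].
Qed.

Lemma complemented_top : complemented (@top L).
Proof.
  exists bot. split; [apply le_bot_eq, meet_r | apply top_le_eq, join_l].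
Qed.

Lemma complemented_join x y :
  complemented x -> complemented y -> complemented (join x y).
Proof.
  intros [x' [Hx1 Hx2]] [y' [Hy1 Hy2]]. exists (meet x' y'). split.
  - apply le_bot_eq. rewrite meet_comm.
    eapply le_trans; [apply meet_join_distr_le | apply join_lub].
    + rewrite <- Hx1, (meet_comm _ x). apply meet_mono; [apply meet_l | apply le_refl].
    + rewrite <- Hy1, (meet_comm _ y). apply meet_mono; [apply meet_r | apply le_refl].
  - apply top_le_eq. rewrite join_meet_distr. apply meet_glb.
    + rewrite <- Hx2. apply join_mono; [apply join_l | apply le_refl].
    + rewrite <- Hy2. apply join_lub; [| apply join_r].
      eapply le_trans; [apply join_r | apply join_l].
Qed.

Lemma complemented_meet x y :
  complemented x -> complemented y -> complemented (meet x y).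
Proof.
  intros [x' [Hx1 Hx2]] [y' [Hy1 Hy2]]. exists (join x' y'). split.
  - apply le_bot_eq.
    eapply le_trans; [apply meet_join_distr_le | apply join_lub].
    + rewrite <- Hx1. apply meet_mono; [apply meet_l | apply le_refl].
    + rewrite <- Hy1. apply meet_mono; [apply meet_r | apply le_refl].
  - apply top_le_eq. rewrite join_comm, join_meet_distr. apply meet_glb.
    + rewrite <- Hx2, (join_comm _ x). apply join_mono; [apply join_l | apply le_refl].
    + rewrite <- Hy2, (join_comm _ y). apply join_mono; [apply join_r | apply le_refl].
Qed.

End CoframeFacts.

Section CoframeMorphisms.
Context {L L' : Coframe} {f : L -> L'}.
Hypothesis f_mor : coframe_mor f.

Lemma mor_meet x y : f (meet x y) = meet (f x) (f y).
Proof.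
  unfold meet. rewrite (proj1 f_mor). apply inf_ext. intro w; split.
  - intros [v [[-> | ->] ->]]; auto.
  - intros [-> | ->]; eauto.
Qed.

Lemma mor_mono x y : le x y -> le (f x) (f y).
Proof.
  intro Hxy.
  replace x with (meet x y)
    by (apply le_antisym; [apply meet_l | apply meet_glb; [apply le_refl | exact Hxy]]).
  rewrite mor_meet. apply meet_r.
Qed.

Lemma mor_top : f top = top.
Proof.
  unfold top. rewrite (proj1 f_mor). apply inf_ext. intro w; split.
  - intros [v [[] _]].
  - intros [].
Qed.

Lemma mor_complemented x : complemented x -> complemented (f x).
Proof.
  intros [x' [H1 H2]]. exists (f x'). split.
  - rewrite <- mor_meet, H1. apply (proj1 (proj2 f_mor)).
  - rewrite <- (proj2 (proj2 f_mor)), H2. apply mor_top.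
Qed.

Lemma le_mor_lower_adj l' : le l' (f (lower_adj f l')).
Proof.
  unfold lower_adj. rewrite (proj1 f_mor). apply inf_glb.
  intros y [x [H ->]]. exact H.
Qed.

End CoframeMorphisms.

Lemma lower_adj_le {L L' : Coframe} (f : L -> L') l l' :
  le l' (f l) -> le (lower_adj f l') l.
Proof. intro H. apply inf_lb. exact H. Qed.

Definition monotone {L : CLat} (g : L -> L) : Prop :=
  forall x y, le x y -> le (g x) (g y).

Definition adh_compatible {L L' : Coframe} (f : L -> L') (nu : L -> L) (nu' : L' -> L') : Prop :=
  forall l', le (nu' l') (f (nu (lower_adj f l'))).

Lemma adherence_mono {L : Coframe} {nu : L -> L} : adherence nu -> monotone nu.
Proof. intros [Hmono _]. exact Hmono. Qed.

Section ClosedSets.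
Context {L : Coframe}.

Lemma C_of_topological (nu : L -> L) : adherence nu -> topological (C_of nu).
Proof.
  intros [Hmono [Hbot [Hjoin _]]]. split; [| split; [| split; [| split]]].
  - intros c [Hc _]. exact Hc.
  - split; [apply complemented_bot | rewrite Hbot; apply le_refl].
  - split; [apply complemented_top | apply le_top].
  - intros a b [Ca Na] [Cb Nb]. split; [apply complemented_join; assumption |].
    rewrite Hjoin by assumption. apply join_mono; assumption.
  - intros a b [Ca Na] [Cb Nb]. split; [apply complemented_meet; assumption |].
    apply meet_glb.
    + eapply le_trans; [apply Hmono, meet_l | exact Na].
    + eapply le_trans; [apply Hmono, meet_r | exact Nb].
Qed.

Lemma nu_of_mono (C : L -> Prop) : monotone (nu_of C).
Proof.
  intros x y Hxy. apply inf_le_inf. intros c [Cc Hc].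
  split; [exact Cc | eapply le_trans; eassumption].
Qed.

Lemma nu_of_closed_le (C : L -> Prop) c : C c -> le (nu_of C c) c.
Proof. intro Cc. apply inf_lb. split; [exact Cc | apply le_refl]. Qed.

Lemma nu_of_adherence (C : L -> Prop) : topological C -> adherence (nu_of C).
Proof.
  intros [Ccompl [Cbot [_ [Cjoin _]]]]. split; [| split; [| split]].
  - apply nu_of_mono.
  - apply le_bot_eq, nu_of_closed_le, Cbot.
  - intros a b _ _. apply le_antisym.
    + unfold nu_of at 2 3. rewrite join_inf_inf. apply inf_le_inf.
      intros w [c [d [[Cc Hc] [[Cd Hd] ->]]]].
      split; [apply Cjoin; assumption | apply join_mono; assumption].
    + apply join_lub; apply nu_of_mono; [apply join_l | apply join_r].
  - intro l. apply le_antisym.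
    + apply inf_glb. intros y [a [_ [Ha ->]]]. apply nu_of_mono, Ha.
    + apply inf_glb. intros c [Cc Hc]. eapply le_trans.
      * apply inf_lb. exists c. split; [exact (Ccompl c Cc) | split; [exact Hc | reflexivity]].
      * apply nu_of_closed_le, Cc.
Qed.

Lemma closed_sub_C_of_nu_of (C : L -> Prop) c :
  topological C -> C c -> C_of (nu_of C) c.
Proof.
  intros [Ccompl _] Cc. split; [apply Ccompl, Cc | apply nu_of_closed_le, Cc].
Qed.

End ClosedSets.

Section MorphismConditions.
Context {L L' : Coframe} {f : L -> L'}.
Hypothesis f_mor : coframe_mor f.

Lemma C_of_mor {nu : L -> L} {nu' : L' -> L'} :
  monotone nu -> adh_compatible f nu nu' -> forall c, C_of nu c -> C_of nu' (f c).
Proof.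
  intros Hmono Hf c [Cc Nc]. split; [apply mor_complemented; assumption |].
  eapply le_trans; [apply Hf | apply (mor_mono f_mor)].
  eapply le_trans; [apply Hmono, lower_adj_le, le_refl | exact Nc].
Qed.

Lemma adh_compatible_of_closed (C : L -> Prop) (nu' : L' -> L') :
  monotone nu' -> (forall c, C c -> le (nu' (f c)) (f c)) ->
  adh_compatible f (nu_of C) nu'.
Proof.
  intros Hmono HC l'. unfold nu_of. rewrite (proj1 f_mor). apply inf_glb.
  intros y [c [[Cc Hc] ->]]. eapply le_trans; [| apply HC, Cc].
  apply Hmono. eapply le_trans; [apply (le_mor_lower_adj f_mor) | apply (mor_mono f_mor), Hc].
Qed.

End MorphismConditions.

Theorem mainTheorem13 (Ob : Coframe -> Prop) (II JJ : Type -> Prop) :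
  admissible Ob II JJ ->
  (* F : C^adh -> C^top, (L, nu) |-> (L, C_nu), identity on morphisms *)
  (forall (L : Coframe) (nu : L -> L),
      Ob L -> adherence nu -> topological (C_of nu)) /\
  (forall (L L' : Coframe) (nu : L -> L) (nu' : L' -> L') (f : L -> L'),
      Ob L -> Ob L' -> adherence nu -> adherence nu' ->
      adh_mor II JJ nu nu' f -> top_mor II JJ (C_of nu) (C_of nu') f) /\
  (* G : C^top -> C^adh, (L, C) |-> (L, nu_C), identity on morphisms *)
  (forall (L : Coframe) (C : L -> Prop),
      Ob L -> topological C -> adherence (nu_of C)) /\
  (forall (L L' : Coframe) (C : L -> Prop) (C' : L' -> Prop) (f : L -> L'),
      Ob L -> Ob L' -> topological C -> topological C' ->
      top_mor II JJ C C' f -> adh_mor II JJ (nu_of C) (nu_of C') f) /\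
  (* G -| F : hom-set bijection (the identity on underlying maps) *)
  (forall (L L' : Coframe) (C : L -> Prop) (nu' : L' -> L') (f : L -> L'),
      Ob L -> Ob L' -> topological C -> adherence nu' ->
      (adh_mor II JJ (nu_of C) nu' f <-> top_mor II JJ C (C_of nu') f)).
Proof.
  intros [Cmor_coframe _]. split; [| split; [| split; [| split]]].
  - intros L nu _. apply C_of_topological.
  - intros L L' nu nu' f OL OL' Hnu _ [Hf Hcompat]. split; [exact Hf |].
    exact (C_of_mor (Cmor_coframe _ _ f OL OL' Hf) (adherence_mono Hnu) Hcompat).
  - intros L C _. apply nu_of_adherence.
  - intros L L' C C' f OL OL' _ _ [Hf HCC']. split; [exact Hf |].
    apply (adh_compatible_of_closed (Cmor_coframe _ _ f OL OL' Hf)); [apply nu_of_mono |].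
    intros c Cc. apply nu_of_closed_le, HCC', Cc.
  - intros L L' C nu' f OL OL' HC Hnu'. split; intros [Hf Hcompat]; split; try exact Hf.
    + intros c Cc. apply (C_of_mor (Cmor_coframe _ _ f OL OL' Hf) (nu_of_mono C) Hcompat).
      apply closed_sub_C_of_nu_of; assumption.
    + apply (adh_compatible_of_closed (Cmor_coframe _ _ f OL OL' Hf)); [apply adherence_mono, Hnu' |].
      intros c Cc. apply (Hcompat c Cc).
Qed.
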